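(* Let $n\ge 3$. The characteristic polynomial $\det(xI-A)$ of the adjacency matrix $A$ of the power graph $P(G(n))$ of the gyrogroup $G(n)$ (defined in the context) is $$x^{2^{n-1}-1}(1+x)^{2^{n-1}-2}\left[x^3+(2-2^{n-1})x^2+(1-2^n)x+2^{2n-2}-2^n\right].$$
   Context: Let $n\ge 3$ be an integer and $m=2^{n-1}$. Let $P(n)=\{0,1,\dots,m-1\}$, $H(n)=\{m,m+1,\dots,2^n-1\}$ and $G(n)=P(n)\cup H(n)$. For $i,j\in G(n)$ let $t,s,k\in P(n)$ be the residues modulo $m$ (taken in $\{0,\dots,m-1\}$) of $i+j$, $i+(\frac m2-1)j$ and $(\frac m2+1)i+(\frac m2-1)j$, respectively, and define $i\oplus j=t$ if $i,j\in P(n)$; $i\oplus j=t+m$ if $i\in P(n),j\in H(n)$; $i\oplus j=s+m$ if $i\in H(n),j\in P(n)$; $i\oplus j=k$ if $i,j\in H(n)$. Then $(G(n),\oplus)$ is a gyrogroup with identity $e=0$. Powers are defined by $a^1=a$, $a^{k+1}=a^k\oplus a$. The power graph $P(G(n))$ is the simple undirected graph with vertex set $G(n)$ in which distinct vertices $u,v$ are adjacent if and only if $u^k=v$ or $v^k=u$ for some positive integer $k$. *)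

From HB Require Import structures.
From mathcomp Require Import all_boot all_order all_algebra.
From mathcomp Require Import boolp.
Set Implicit Arguments. Unset Strict Implicit. Unset Printing Implicit Defensive.
Import GRing.Theory.

Definition gm (n : nat) : nat := 2 ^ n.-1.

Definition gyro_op (n i j : nat) : nat :=
  let m := gm n in
  let t := (i + j) %% m in
  let s := (i + (m %/ 2 - 1) * j) %% m in
  let k := ((m %/ 2 + 1) * i + (m %/ 2 - 1) * j) %% m in
  if i < m then (if j < m then t else t + m)
  else (if j < m then s + m else k).

(* gyro_pow n a k = a^(k+1), with a^1 = a and a^(k+1) = a^k (+) a *)
Fixpoint gyro_pow (n a k : nat) : nat :=
  match k with
  | 0 => a
  | k'.+1 => gyro_op n (gyro_pow n a k') a
  end.

Definition is_power (n a b : nat) : Prop := exists k : nat, gyro_pow n a k = b.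

Definition pg_adj (n : nat) (u v : 'I_(2 ^ n)) : Prop :=
  u <> v /\ (is_power n (val u) (val v) \/ is_power n (val v) (val u)).

Definition pg_adjmx (n : nat) : 'M[int]_(2 ^ n) :=
  \matrix_(i, j) (if `[< @pg_adj n i j >] then 1%R else 0%R).

(* In G(n) the set P(n) is the cyclic group Z/m, m = 2^(n-1), whose subgroups form a chain,
   and the powers of any a in H(n) alternate between a and 0.  Hence the power graph is the
   complete graph on P(n) with every vertex of H(n) joined to 0 only.  A Schur complement on
   the scalar block x I indexed by H(n) reduces det (x I - A) to det (a I - x J - m E_00) with
   a = x (x + 1); this is a rank-two perturbation of a I, and Sylvester's identity
   a^2 det (a I - U V) = a^m det (a I - V U) leaves a 2 x 2 determinant. *)

From mathcomp Require Import all_boot all_order all_algebra.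
From mathcomp Require Import boolp zify ring.
Set Implicit Arguments. Unset Strict Implicit. Unset Printing Implicit Defensive.
Import GRing.Theory.

Definition clique_star_adj (m u v : nat) : bool :=
  (u != v) && [|| (u < m) && (v < m), u == 0 | v == 0].

Section PowerGraphAdjacency.

Variable n : nat.
Local Notation m := (gm n).

Lemma gm_gt0 : 0 < m.
Proof. exact: expn_gt0. Qed.

Lemma gm_halves : m %/ 2 + 1 + (m %/ 2 - 1) = m.
Proof.
rewrite /gm; case: n.-1 => [|e] //.
by rewrite expnS mulKn //; have := expn_gt0 2 e; lia.
Qed.

Lemma gyro_opPP i j : i < m -> j < m -> gyro_op n i j = (i + j) %% m.
Proof. by move=> hi hj; rewrite /gyro_op hi hj. Qed.

Lemma gyro_opPH i j : i < m -> m <= j -> gyro_op n i j = (i + j) %% m + m.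
Proof. by move=> hi hj; rewrite /gyro_op hi ltnNge hj. Qed.

Lemma gyro_opHH i j : m <= i -> m <= j ->
  gyro_op n i j = ((m %/ 2 + 1) * i + (m %/ 2 - 1) * j) %% m.
Proof. by move=> hi hj; rewrite /gyro_op ltnNge hi ltnNge hj. Qed.

Lemma gyro_powP a k : a < m -> gyro_pow n a k = k.+1 * a %% m.
Proof.
move=> am; elim: k => [|k IHk] /=; first by rewrite mul1n modn_small.
by rewrite IHk gyro_opPP ?ltn_pmod ?gm_gt0 // modnDml -mulSnr.
Qed.

(* For m <= a, a (+) a = m * a %% m = 0 by [gm_halves], and 0 (+) a = a. *)
Lemma gyro_powH a k : m <= a < m + m -> gyro_pow n a k = if odd k then 0 else a.
Proof.
case/andP=> ma am2; elim: k => [|k IHk] //=; rewrite IHk; case: (odd k) => /=.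
  by rewrite gyro_opPH ?gm_gt0 // add0n -(subnK ma) modnDr modn_small ?addnK //; lia.
by rewrite gyro_opHH // -mulnDl gm_halves modnMr.
Qed.

Lemma is_power_cases a b : a < m + m -> is_power n a b ->
  (a < m /\ b < m) \/ b = 0 \/ b = a.
Proof.
move=> am2 [k <-]; case: (ltnP a m) => [am | ma].
  by left; rewrite gyro_powP // ltn_pmod ?gm_gt0.
by right; rewrite gyro_powH ?ma //; case: (odd k); [left | right].
Qed.

Lemma is_power0 a : a < m + m -> is_power n a 0.
Proof.
move=> am2; case: (ltnP a m) => [am | ma]; last by exists 1; rewrite gyro_powH ?ma.
by exists m.-1; rewrite gyro_powP // prednK ?gm_gt0 // modnMr.
Qed.

Lemma is_power_gcd u v : 0 < u < m -> gcdn u m %| v -> v < m -> is_power n u v.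
Proof.
case/andP=> u_gt0 um /dvdnP[q def_v] vm.
have [ku km def_g _] := egcdnP m u_gt0.
exists (ku * q + m).-1; rewrite gyro_powP // prednK; last by have := gm_gt0; lia.
have -> : (ku * q + m) * u = (q * km + u) * m + v by rewrite def_v; nia.
by rewrite modnMDl modn_small.
Qed.

(* The subgroups of the cyclic 2-group P(n) form a chain. *)
Lemma is_power_comparable u v : u < m -> v < m -> is_power n u v \/ is_power n v u.
Proof.
move=> um vm.
have [->|u_gt0] := posnP u; first by right; apply: is_power0; lia.
have [->|v_gt0] := posnP v; first by left; apply: is_power0; lia.
have gcd_pow2 w : exists e, gcdn w m = 2 ^ e.
  by case/dvdn_pfactor: (dvdn_gcdr w m) => // e _ ->; exists e.
have [e def_gu] := gcd_pow2 u; have [f def_gv] := gcd_pow2 v.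
have [ef | fe] := leqP e f.
  left; apply: is_power_gcd; rewrite ?u_gt0 //.
  by apply: dvdn_trans (dvdn_gcdl v m); rewrite def_gu def_gv dvdn_exp2l.
right; apply: is_power_gcd; rewrite ?v_gt0 //.
by apply: dvdn_trans (dvdn_gcdl u m); rewrite def_gu def_gv dvdn_exp2l // ltnW.
Qed.

Lemma pg_adj_clique_star (u v : 'I_(2 ^ n)) : pg_adj u v <-> clique_star_adj m u v.
Proof.
have lt_m2 (w : 'I_(2 ^ n)) : w < m + m.
  by apply: leq_trans (ltn_ord w) _; rewrite addnn -mul2n -expnS /gm; case: n.
rewrite /pg_adj /clique_star_adj; split.
  case=> neq_uv; have neq_uv' : val u != val v by apply/eqP=> /val_inj.
  rewrite neq_uv' /=.
  case=> [/(is_power_cases (lt_m2 u)) | /(is_power_cases (lt_m2 v))]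
    [[-> ->] // | [-> | /val_inj eq_uv]]; rewrite ?eqxx ?orbT //;
    by rewrite eq_uv in neq_uv.
case/andP=> /eqP neq_uv adj_uv; split=> [eq_uv | ]; first by rewrite eq_uv in neq_uv.
case/or3P: adj_uv => [/andP[um vm] | /eqP u0 | /eqP v0]; first exact: is_power_comparable.
  by right; rewrite /= u0; apply: is_power0.
by left; rewrite /= v0; apply: is_power0.
Qed.

Lemma pg_adjmxE (i j : 'I_(2 ^ n)) : pg_adjmx n i j = (clique_star_adj m i j)%:R%R.
Proof. by rewrite mxE (asbool_equiv_eq (pg_adj_clique_star i j)) asboolb; case: ifP. Qed.

End PowerGraphAdjacency.

Local Open Scope ring_scope.

Section BlockDeterminants.

Variable R : comPzRingType.

Lemma det_block_scalar_dr k l (A : 'M[R]_k) (B : 'M_(k, l)) C (x : R) :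
  x ^+ k * \det (block_mx A B C x%:M) = x ^+ l * \det (x *: A - B *m C).
Proof.
pose L := block_mx (x%:M : 'M_k) (- B) 0 (1%:M : 'M_l).
have LM : L *m block_mx A B C x%:M = block_mx (x *: A - B *m C) 0 C x%:M.
  rewrite mulmx_block !mul0mx !mul1mx !add0r mul_scalar_mx !mulNmx.
  by rewrite mul_scalar_mx mul_mx_scalar addrN.
have := congr1 determinant LM.
by rewrite det_mulmx det_ublock det_lblock !det_scalar expr1n mulr1 [RHS]mulrC.
Qed.

Lemma det_block_1ul k l (B : 'M[R]_(k, l)) C D :
  \det (block_mx 1%:M B C D) = \det (D - C *m B).
Proof.
pose L := block_mx (1%:M : 'M_k) 0 (- C) (1%:M : 'M_l).
have LM : L *m block_mx 1%:M B C D = block_mx 1%:M B 0 (D - C *m B).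
  rewrite mulmx_block !mul0mx !mul1mx !addr0 !mulNmx mulmx1 addNr.
  by rewrite addrC.
have := congr1 determinant LM.
by rewrite det_mulmx det_ublock det_lblock !det1 !mul1r.
Qed.

(* Sylvester's determinant identity, in a form that needs no division. *)
Lemma det_sylvester k p (a : R) (U : 'M[R]_(k, p)) (V : 'M_(p, k)) :
  a ^+ p * \det (a%:M - U *m V) = a ^+ k * \det (a%:M - V *m U).
Proof.
by rewrite -det_block_1ul det_block_scalar_dr scalemx1.
Qed.

Lemma det_mx22 (M : 'M[R]_2) : \det M = M 0 0 * M 1 1 - M 0 1 * M 1 0.
Proof.
rewrite (expand_det_row _ 0) !big_ord_recl big_ord0 addr0 /cofactor !det_mx11 !mxE.
have -> : lift 0 0 = 1 :> 'I_2 by apply: val_inj.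
have -> : lift 1 0 = 0 :> 'I_2 by apply: val_inj.
by rewrite /= expr0 mul1r expr1 mulN1r mulrN.
Qed.

End BlockDeterminants.

Lemma sum_indicator0 (R : pzSemiRingType) m :
  (0 < m)%N -> \sum_(r < m) ((r : nat) == 0)%:R = 1 :> R.
Proof. by case: m => // m _; rewrite big_ord_recl big1 ?addr0. Qed.

Section CliqueStarDeterminant.

Variables (R : idomainType) (m : nat) (x : R).

Definition clique_star_charmx : 'M[R]_(m + m) :=
  \matrix_(i, j) (x *+ (i == j) - (clique_star_adj m i j)%:R).

Lemma clique_star_charmx_block :
  clique_star_charmx =
  block_mx (\matrix_(i, j) ((1 + x) *+ (i == j) - 1)) (\matrix_(i, j) - ((i : nat) == 0)%:R)
           (\matrix_(i, j) - ((j : nat) == 0)%:R) x%:M.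
Proof.
have shift_ltF (i : 'I_m) : (m + i < m)%N = false by lia.
have shift_eq0F (i j : 'I_m) : (m + i == 0)%N = false by have := ltn_ord j; lia.
have lshift_eqF (i j : 'I_m) : ((i : nat) == m + j)%N = false by have := ltn_ord i; lia.
rewrite -[LHS]submxK; congr block_mx; apply/matrixP=> i j; rewrite !mxE /clique_star_adj /=.
- rewrite eq_lshift !ltn_ord /=; have [<-|ne] := eqVneq i j; first by rewrite eqxx /=; ring.
  have ne_nat : (i : nat) != j := ne.
  by rewrite ne_nat /=; ring.
- by rewrite eq_lrshift lshift_eqF shift_ltF (shift_eq0F j i) andbF /= orbF sub0r.
- by rewrite eq_rlshift eq_sym lshift_eqF shift_ltF (shift_eq0F i j) /= sub0r.
- by rewrite eq_rshift !shift_ltF !(shift_eq0F _ i) /= andbF subr0.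
Qed.

Lemma det_clique_star_charmx : (1 < m)%N -> x != 0 -> 1 + x != 0 ->
  \det clique_star_charmx =
  x ^+ (m - 1) * (1 + x) ^+ (m - 2) *
  (x ^+ 3 + (2 - m%:R) * x ^+ 2 + (1 - (m + m)%:R) * x + ((m * m)%:R - (m + m)%:R)).
Proof.
move=> m_gt1 x_neq0 x1_neq0.
pose a := x * (1 + x).
pose U : 'M[R]_(m, 2) := \matrix_(i, j) (if j == 0 then x else m%:R * ((i : nat) == 0)%:R).
pose V : 'M[R]_(2, m) := \matrix_(i, j) (if i == 0 then 1 else ((j : nat) == 0)%:R).
have schur : \det clique_star_charmx = \det (a%:M - U *m V).
  apply: (mulfI (expf_neq0 m x_neq0)).
  rewrite clique_star_charmx_block det_block_scalar_dr; congr (_ * \det _).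
  apply/matrixP=> i j; rewrite !mxE !big_ord_recl big_ord0 !mxE /=.
  under eq_bigr do rewrite !mxE mulrNN -natrM.
  rewrite sumr_const card_ord /a.
  by case: (i == j); case: (_ == 0)%N; case: (_ == 0)%N; rewrite /=; ring.
have sylvester := det_sylvester a U V.
have e0 := @sum_indicator0 R m (ltnW m_gt1).
have VU00 : \sum_(r < m) V 0 r * U r 0 = x *+ m.
  by under eq_bigr do rewrite !mxE mul1r; rewrite sumr_const card_ord.
have VU01 : \sum_(r < m) V 0 r * U r 1 = m%:R.
  by under eq_bigr do rewrite !mxE /= mul1r; rewrite -mulr_sumr e0 mulr1.
have VU10 : \sum_(r < m) V 1 r * U r 0 = x.
  by under eq_bigr do rewrite !mxE /=; rewrite -mulr_suml e0 mul1r.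
have VU11 : \sum_(r < m) V 1 r * U r 1 = m%:R.
  under eq_bigr do rewrite !mxE /= mulrCA -natrM mulnb andbb.
  by rewrite -mulr_sumr e0 mulr1.
rewrite det_mx22 !mxE /= VU00 VU01 VU10 VU11 in sylvester.
have a_neq0 : a != 0 by rewrite mulf_neq0.
apply: (mulfI (expf_neq0 2 a_neq0)); rewrite schur sylvester.
have -> : a ^+ m = a ^+ 2 * a ^+ (m - 2) by rewrite -exprD subnKC.
have -> : (m - 1 = (m - 2).+1)%N by lia.
rewrite /a [(x * _) ^+ (m - 2)]exprMn [x ^+ (m - 2).+1]exprS; ring.
Qed.

End CliqueStarDeterminant.

Theorem mainTheorem8 (n : nat) (hn : (3 <= n)%N) :
  char_poly (pg_adjmx n) =
  'X ^+ (2 ^ n.-1 - 1) * (1 + 'X) ^+ (2 ^ n.-1 - 2) *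
  ('X ^+ 3 + ((2 : int) - (2 ^ n.-1)%:Z)%:P * 'X ^+ 2
   + ((1 : int) - (2 ^ n)%:Z)%:P * 'X
   + ((2 ^ (2 * n - 2))%:Z - (2 ^ n)%:Z)%:P).
Proof.
case: n hn => [|[|[|k]]] // _; rewrite -/(gm k.+3).
have m_gt1 : (1 < gm k.+3)%N by rewrite /gm /= !expnS; have := expn_gt0 2 k; lia.
have e2n : (2 ^ k.+3 = gm k.+3 + gm k.+3)%N by rewrite /gm /= [LHS]expnS addnn mul2n.
have e2n2 : (2 ^ (2 * k.+3 - 2) = gm k.+3 * gm k.+3)%N.
  by rewrite /gm /= -expnD; congr (2 ^ _)%N; lia.
rewrite e2n2; have := @pg_adjmxE k.+3; move: (pg_adjmx k.+3); rewrite e2n => A adjA.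
have -> : char_poly A = \det (clique_star_charmx (gm k.+3) 'X).
  by rewrite /char_poly; congr (\det _); apply/matrixP=> i j; rewrite !mxE adjA rmorph_nat.
rewrite det_clique_star_charmx ?polyX_eq0 //; first by ring.
by rewrite addrC -polyC1 monic_neq0 ?monicXaddC.
Qed.
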